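(* Let $d\ge2$, $\delta\in[0,1/d)$, and let $N$ be a $d\times d$ $\delta$-upper bounded noise matrix. There exists a stochastic matrix $P$ such that $N\cdot P$ is $\delta'$-uniform, where $\delta'=f(\delta)$ with $$f(0)=0,\qquad f(\delta)=\left(d+\frac{1}{2}\cdot\frac{1}{(d-1)^2}\cdot\frac{1-d\delta}{\delta}\right)^{-1}\ \text{for }\delta\in(0,1/d).$$
   Context: A matrix is stochastic if its entries are non-negative and each row sums to $1$. For $\delta\in[0,1/d]$, a stochastic $d\times d$ matrix $N$ is: - $\delta$-upper bounded if $N_{i,i}\ge1-(d-1)\delta$ for all $i$ and $N_{i,j}\le\delta$ for all $i\ne j$; - $\delta$-uniform if $N_{i,i}=1-(d-1)\delta$ and $N_{i,j}=\delta$ for all $i\ne j$. *)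

From mathcomp Require Import all_boot all_order all_algebra.
Set Implicit Arguments. Unset Strict Implicit. Unset Printing Implicit Defensive.
Import Order.TTheory GRing.Theory Num.Theory.
Local Open Scope ring_scope.

Definition stochastic (R : numDomainType) (d : nat) (N : 'M[R]_d) : Prop :=
  (forall i j, 0 <= N i j) /\ (forall i, \sum_(j < d) N i j = 1).

Definition upper_bounded (R : numDomainType) (d : nat) (delta : R) (N : 'M[R]_d) : Prop :=
  stochastic N /\
  (forall i, 1 - (d%:R - 1) * delta <= N i i) /\
  (forall i j, i != j -> N i j <= delta).

Definition uniform (R : numDomainType) (d : nat) (delta : R) (N : 'M[R]_d) : Prop :=
  stochastic N /\
  (forall i, N i i = 1 - (d%:R - 1) * delta) /\
  (forall i j, i != j -> N i j = delta).

Definition fdelta (R : numFieldType) (d : nat) (delta : R) : R :=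
  if delta == 0 then 0
  else (d%:R + 2^-1 * ((d%:R - 1) ^+ 2)^-1 * ((1 - d%:R * delta) / delta))^-1.

From mathcomp Require Import all_boot all_order all_algebra.
From mathcomp Require Import ring lra.
Set Implicit Arguments. Unset Strict Implicit. Unset Printing Implicit Defensive.
Import Order.TTheory GRing.Theory Num.Theory.
Local Open Scope ring_scope.

(* Write N = M + delta J with J the all-ones matrix. M has nonpositive
   off-diagonal entries and constant row sums a = 1 - d delta > 0, so by the
   minimum principle it is invertible with a nonnegative inverse X whose rows
   sum to 1/a. For any target e, P = b X + 1 z^T with b = 1 - d e and a
   suitable z satisfies N P = b I + e J, and P is stochastic once z >= 0.
   Bounding each column sum of X by the total d/a, z >= 0 reduces to
   d delta b <= e a, which holds for e = f(delta) because d <= 2 (d - 1)^2. *)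

Section Zmatrix.
Variables (R : realFieldType) (d : nat) (M : 'M[R]_d).
Hypothesis M_offdiag_le0 : forall i j, i != j -> M i j <= 0.
Hypothesis M_row_gt0 : forall i, 0 < \sum_j M i j.

Lemma Zmatrix_min_principle (x : 'I_d -> R) :
  (forall i, 0 <= \sum_j M i j * x j) -> forall i, 0 <= x i.
Proof.
move=> Mx_ge0 i.
have [i0 _ x_min] := @arg_minP _ _ _ i xpredT x isT.
apply: le_trans (x_min i isT).
have Mx_split : \sum_j M i0 j * x j
    = (\sum_j M i0 j) * x i0 + \sum_j M i0 j * (x j - x i0).
  by rewrite mulr_suml -big_split /=; apply: eq_bigr => j _; ring.
have rest_le0 : \sum_j M i0 j * (x j - x i0) <= 0.
  apply: sumr_le0 => j _; have [<-|ne] := eqVneq i0 j; first by rewrite subrr mulr0.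
  by rewrite mulr_le0_ge0 ?M_offdiag_le0 // subr_ge0 x_min.
rewrite -(pmulr_rge0 _ (M_row_gt0 i0)).
by have := Mx_ge0 i0; rewrite Mx_split; lra.
Qed.

Lemma Zmatrix_unit : M \in unitmx.
Proof.
rewrite -unitmx_tr -row_free_unit -kermx_eq0; apply/eqP/row_matrixP => i.
rewrite row0; set u := row i _.
have Mu0 k : \sum_j M k j * u 0 j = 0.
  have /sub_kermxP uMT0 : (u <= kermx M^T)%MS by exact: row_sub.
  transitivity ((u *m M^T) 0 k); last by rewrite uMT0 mxE.
  by rewrite mxE; apply: eq_bigr => j _; rewrite !mxE mulrC.
apply/rowP => j; rewrite [RHS]mxE; apply/le_anti/andP; split.
- rewrite -oppr_ge0; apply: (@Zmatrix_min_principle (fun j => - u 0 j)) => k.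
  by under eq_bigr do rewrite mulrN; rewrite sumrN Mu0 oppr0.
- by apply: (@Zmatrix_min_principle (u 0)) => k; rewrite Mu0.
Qed.

Lemma Zmatrix_invmx_ge0 j k : 0 <= invmx M j k.
Proof.
apply: (@Zmatrix_min_principle (invmx M ^~ k)) => i.
have -> : \sum_j M i j * invmx M j k = (M *m invmx M) i k by rewrite mxE.
by rewrite mulmxV ?Zmatrix_unit // mxE ler0n.
Qed.

End Zmatrix.

Lemma invmx_row_sum (F : fieldType) (d : nat) (M : 'M[F]_d) (a : F) :
  M \in unitmx -> a != 0 -> (forall i, \sum_j M i j = a) ->
  forall j, \sum_k invmx M j k = a^-1.
Proof.
move=> M_unit a_neq0 M_row j; apply: (mulIf a_neq0); rewrite mulVf // mulr_suml.
transitivity (\sum_k \sum_l invmx M j k * M k l).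
  by apply: eq_bigr => k _; rewrite -mulr_sumr M_row.
rewrite exchange_big /=; transitivity (\sum_l (invmx M *m M) j l).
  by apply: eq_bigr => l _; rewrite mxE.
rewrite mulVmx // (bigD1 j) //= big1 ?addr0; first by rewrite mxE eqxx.
by move=> l /negbTE jl; rewrite mxE eq_sym jl.
Qed.

Lemma uniform_of_entries (R : numDomainType) (d : nat) (e : R) (A : 'M[R]_d) :
  0 <= e -> 0 <= 1 - d%:R * e ->
  (forall i k, A i k = (1 - d%:R * e) * (i == k)%:R + e) -> uniform e A.
Proof.
move=> e_ge0 de_le1 A_entries; split; first split.
- by move=> i k; rewrite A_entries addr_ge0 // mulr_ge0 // ler0n.
- move=> i; under eq_bigr do rewrite A_entries.
  rewrite big_split /= -mulr_sumr sumr_const card_ord (bigD1 i) //= big1 ?eqxx.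
    by rewrite addr0 mulr1 mulr_natl; ring.
  by move=> l /negbTE; rewrite eq_sym => ->.
split.
- by move=> i; rewrite A_entries eqxx mulr1; ring.
- by move=> i j /negbTE ij; rewrite A_entries ij mulr0 add0r.
Qed.

Section Uniformizer.
Variables (R : realFieldType) (d : nat) (N : 'M[R]_d) (delta e : R).
Hypothesis N_row : forall i, \sum_j N i j = 1.
Hypothesis N_offdiag_le : forall i j, i != j -> N i j <= delta.
Hypothesis delta_ge0 : 0 <= delta.
Hypothesis one_sub_ddelta_gt0 : 0 < 1 - d%:R * delta.
Hypothesis e_ge0 : 0 <= e.
Hypothesis one_sub_de_ge0 : 0 <= 1 - d%:R * e.
Hypothesis delta_e_compat :
  d%:R * delta * (1 - d%:R * e) <= e * (1 - d%:R * delta).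

Let a := 1 - d%:R * delta.
Let b := 1 - d%:R * e.
Let M := N - const_mx delta.
Let X := invmx M.
Let c k := \sum_j X j k.
(* Since N = M + delta J, J X has rows c and M X = I, this z gives N P = b I + e J. *)
Let z k := e - delta * b * c k.
Let P : 'M[R]_d := \matrix_(j, k) (b * X j k + z k).

Let M_row i : \sum_j M i j = a.
Proof.
under eq_bigr do rewrite !mxE.
by rewrite sumrB N_row sumr_const card_ord /a mulr_natl.
Qed.

Let M_offdiag_le0 i j : i != j -> M i j <= 0.
Proof. by move=> ij; rewrite !mxE subr_le0 N_offdiag_le. Qed.

Let M_row_gt0 i : 0 < \sum_j M i j.
Proof. by rewrite M_row. Qed.

Let X_ge0 j k : 0 <= X j k.
Proof. exact: Zmatrix_invmx_ge0. Qed.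

Let X_row j : \sum_k X j k = a^-1.
Proof. by apply: invmx_row_sum; rewrite ?Zmatrix_unit ?gt_eqF. Qed.

Let c_sum : \sum_k c k = d%:R * a^-1.
Proof.
rewrite exchange_big /=; under eq_bigr do rewrite X_row.
by rewrite sumr_const card_ord mulr_natl.
Qed.

Let z_ge0 k : 0 <= z k.
Proof.
have c_le : c k <= d%:R * a^-1.
  rewrite -c_sum (bigD1 k) //= lerDl.
  by apply: sumr_ge0 => l _; apply: sumr_ge0.
rewrite subr_ge0; apply: (@le_trans _ _ (delta * b * (d%:R * a^-1))).
  by apply: ler_wpM2l => //; apply: mulr_ge0.
rewrite mulrA -ler_pdivlMr ?invr_gt0 // invrK.
by rewrite mulrC mulrA; exact: delta_e_compat.
Qed.

Let uniformizer_stochastic : stochastic P.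
Proof.
split=> [j k|j]; first by rewrite mxE addr_ge0 // mulr_ge0.
under eq_bigr do rewrite mxE.
rewrite big_split /= -mulr_sumr X_row sumrB sumr_const card_ord -mulr_sumr c_sum.
by rewrite /a /b mulr_natl; field; rewrite gt_eqF.
Qed.

Let mulmx_uniformizerE i k : (N *m P) i k = b * (i == k)%:R + e.
Proof.
rewrite mxE; under eq_bigr do rewrite mxE mulrDr.
rewrite big_split /= -mulr_suml N_row mul1r.
have -> : \sum_j N i j * (b * X j k) = b * ((M *m X) i k + delta * c k).
  rewrite mxE mulr_sumr -big_split mulr_sumr /=; apply: eq_bigr => j _.
  by rewrite !mxE; ring.
by rewrite mulmxV ?Zmatrix_unit // mxE /z; ring.
Qed.

Lemma exists_uniformizer : exists P : 'M[R]_d, stochastic P /\ uniform e (N *m P).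
Proof.
exists P; split; first exact: uniformizer_stochastic.
exact: uniform_of_entries mulmx_uniformizerE.
Qed.

End Uniformizer.

Lemma fdelta_bounds (R : realFieldType) (d : nat) (delta : R) :
  (2 <= d)%N -> 0 < delta -> 0 < 1 - d%:R * delta ->
  let e := fdelta d delta in
  [/\ 0 <= e, 0 <= 1 - d%:R * e &
      d%:R * delta * (1 - d%:R * e) <= e * (1 - d%:R * delta)].
Proof.
move=> d_ge2 delta_gt0 a_gt0 e.
have d_ge2R : (2 : R) <= d%:R by rewrite (ler_nat R 2).
have d1_gt0 : 0 < d%:R - 1 :> R by lra.
set q := 2^-1 * ((d%:R - 1) ^+ 2)^-1 * ((1 - d%:R * delta) / delta).
have q_ge0 : 0 <= q by rewrite /q !mulr_ge0 ?invr_ge0 ?exprn_ge0 ?ltW ?divr_gt0.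
have dq_gt0 : 0 < d%:R + q by lra.
have e_gt0 : 0 < e by rewrite /e /fdelta gt_eqF // invr_gt0.
have de_qe : 1 - d%:R * e = q * e.
  have : e * (d%:R + q) = 1 by rewrite /e /fdelta gt_eqF // mulVf ?gt_eqF.
  by rewrite mulrDr; lra.
have a_q : 1 - d%:R * delta = 2 * (d%:R - 1) ^+ 2 * delta * q.
  by rewrite /q; field; rewrite (gt_eqF delta_gt0) (gt_eqF d1_gt0).
split; [exact: ltW | by rewrite de_qe mulr_ge0 // ltW |].
rewrite de_qe a_q -subr_ge0.
have d_le : 0 <= 2 * (d%:R - 1 : R) ^+ 2 - d%:R by nra.
have := mulr_ge0 d_le (mulr_ge0 (mulr_ge0 (ltW delta_gt0) q_ge0) (ltW e_gt0)).
by congr (0 <= _); ring.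
Qed.

Theorem proposition16 (R : realFieldType) (d : nat) (delta : R) (N : 'M[R]_d) :
  (2 <= d)%N -> 0 <= delta -> delta < d%:R^-1 ->
  upper_bounded delta N ->
  exists P : 'M[R]_d, stochastic P /\ uniform (fdelta d delta) (N *m P).
Proof.
move=> d_ge2 delta_ge0 delta_lt [[_ N_row] [_ N_offdiag_le]].
have d_gt0 : (0 : R) < d%:R by rewrite ltr0n ltnW.
have a_gt0 : 0 < 1 - d%:R * delta.
  by rewrite subr_gt0 -[X in _ < X](mulfV (lt0r_neq0 d_gt0)) ltr_pM2l.
have [delta0|delta_neq0] := eqVneq delta 0.
  rewrite /fdelta delta0 eqxx.
  apply: (exists_uniformizer N_row N_offdiag_le delta_ge0 a_gt0) => //.
    by rewrite mulr0 subr0.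
  by rewrite delta0 !mulr0 mul0r.
have delta_gt0 : 0 < delta by rewrite lt0r delta_neq0.
have [e_ge0 de_le1 compat] := fdelta_bounds d_ge2 delta_gt0 a_gt0.
exact: exists_uniformizer N_row N_offdiag_le delta_ge0 a_gt0 e_ge0 de_le1 compat.
Qed.
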